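(* Let $T$ be a p-string of length $n$, let $v$ be a node of $\mathrm{PPH}(T)$, and let $a\in\Sigma\cup\{0,\ldots,n-1\}$. Suppose $\mathrm{rslink}(a,v)=u$, where $u$ is a node of $\mathrm{PPH}(T)$. Then for every p-string $X$ with $\mathrm{prev}(X)=u$, we have $\mathrm{prev}(X[2..|X|])=v$.
   Context: Let $\Sigma$ and $\Pi$ be disjoint alphabets. A p-string is a finite string over $\Sigma\cup\Pi$. For a string $S$, $S[i]$ is its $i$-th character, $S[i..j]$ is the substring from position $i$ to $j$ (empty if $j<i$), and $S[i..]=S[i..|S|]$. The previous encoding $\mathrm{prev}(S)$ of a p-string $S$ of length $n$ is the sequence of length $n$ defined by: - $\mathrm{prev}(S)[i]=S[i]$ if $S[i]\in\Sigma$; - $\mathrm{prev}(S)[i]=0$ if $S[i]\in\Pi$ does not occur in $S[1..i-1]$; - $\mathrm{prev}(S)[i]=i-j$ otherwise, where $j<i$ is the largest position with $S[j]=S[i]$. Sequence hash tree. Let $\langle S_1,\ldots,S_k\rangle$ be a sequence of strings with $S_1=\varepsilon$ and with $S_i$ not a prefix of $S_j$ for any $j<i$. Its sequence hash tree is built as follows. Start from a root representing $\varepsilon$. For $i=2,\ldots,k$, insert as a new node the shortest prefix $p_i$ of $S_i$ that is not yet a node. Attach it as a child of the longest prefix $q_i$ of $S_i$ that is already a node, via an edge labeled $S_i[|q_i|+1]$. The parameterized position heap $\mathrm{PPH}(T)$ is the sequence hash tree of $\langle\varepsilon,\mathrm{prev}(T[n..]),\ldots,\mathrm{prev}(T[1..])\rangle$.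 Each node is identified with the string of edge labels on the path from the root to it, and $|v|$ denotes its length (the node depth). A string is represented by $\mathrm{PPH}(T)$ if it is spelled by a path from the root. Reversed suffix links. For a node $v$ and $a\in\Sigma\cup\{0,\ldots,n-1\}$, $\mathrm{rslink}(a,v)$ is defined as follows: - if $a\in\Sigma\cup\{0\}$ and $av$ is represented by $\mathrm{PPH}(T)$, then $\mathrm{rslink}(a,v)=av$; - if $a\in\{1,\ldots,n-1\}$, $v[a]=0$, and $u=0\,v[1..a-1]\,a\,v[a+1..|v|]$ is represented by $\mathrm{PPH}(T)$, then $\mathrm{rslink}(a,v)=u$; - otherwise $\mathrm{rslink}(a,v)$ is undefined. *)

From mathcomp Require Import all_boot.
Set Implicit Arguments. Unset Strict Implicit. Unset Printing Implicit Defensive.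

(* A p-string over disjoint alphabets Sigma (static symbols) and Pi
   (parameter symbols): a character is  inl c  (c in Sigma) or  inr p
   (p in Pi); disjointness is built into the sum type.
   The prev-encoding alphabet Sigma ∪ {0,1,2,...} is  Sigma + nat. *)
Definition pstring (Sigma Pi : Type) := seq (Sigma + Pi)%type.
Definition pcode (Sigma : Type) := seq (Sigma + nat)%type.

Section Defs.
Variables (Sigma Pi : eqType).

(* Value of prev(s) at 0-indexed position i, where x = s[i]
   (1-indexed position i+1 in the paper):
   - x in Sigma                         -> x
   - x in Pi, not occurring in s[0..i-1] -> 0
   - otherwise                          -> i - j, j < i the last occurrence. *)
Definition prev_at (s : pstring Sigma Pi) (i : nat) (x : (Sigma + Pi)%type)
  : (Sigma + nat)%type :=
  match x with
  | inl c => inl c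
  | inr p =>
      let pre := take i s in
      let k := index (inr p) (rev pre) in
      if k < size pre then inr k.+1 else inr 0
  end.

Definition prev_encoding (s : pstring Sigma Pi) : pcode Sigma :=
  [seq prev_at s ix.1 ix.2 | ix <- zip (iota 0 (size s)) s].

(* Nodes are identified with the strings they spell,
   so the tree is determined by its (prefix-closed) set of nodes; the
   parent of a new node p is p minus its last character, and the edge
   label is that last character. *)
Definition sht_insert (nodes : seq (pcode Sigma)) (w : pcode Sigma)
  : seq (pcode Sigma) :=
  let k := find (fun k => take k w \notin nodes) (iota 0 (size w).+1) in
  if k <= size w then rcons nodes (take k w) else nodes.

Definition sht (ss : seq (pcode Sigma)) : seq (pcode Sigma) :=
  foldl sht_insert [:: [::]] ss.

(* PPH(T) = sequence hash tree of <eps, prev(T[n..]), ..., prev(T[1..])>;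
   T[i..] = drop (i-1) T. *)
Definition PPH (T : pstring Sigma Pi) : seq (pcode Sigma) :=
  sht [seq prev_encoding (drop k T) | k <- rev (iota 0 (size T))].

(* A string is represented by PPH(T) iff it is spelled by a path from the
   root; since edges carry single characters, such a path ends at a node. *)
Definition represented (T : pstring Sigma Pi) (w : pcode Sigma) : bool :=
  w \in PPH T.

(* Reversed suffix links; None = undefined.  Domain of a:
   Sigma ∪ {0,...,n-1} with n = |T|. *)
Definition rslink (T : pstring Sigma Pi) (a : (Sigma + nat)%type)
  (v : pcode Sigma) : option (pcode Sigma) :=
  match a with
  | inl c => if represented T (a :: v) then Some (a :: v) else None
  | inr 0 => if (0 < size T) && represented T (a :: v)
             then Some (a :: v) else None
  | inr k =>
      (* 1 <= k <= n-1, v[k] = 0 (1-indexed), and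
         u = 0 v[1..k-1] k v[k+1..|v|] is represented *)
      let u := inr 0 :: set_nth (inr 0) v k.-1 (inr k) in
      if [&& k < size T, k <= size v,
             nth (inr 1) v k.-1 == inr 0 & represented T u]
      then Some u else None
  end.
End Defs.

(* Dropping the first character x of X changes prev(X) in a controlled way:
   prev(X[2..]) is the tail of prev(X) in which every entry pointing back to x
   (the value j+1 at 0-indexed position j of the tail) is reset to 0.  No
   prev-encoding, hence no node of PPH(T), points before its own start.  So if
   u = a v this tail is v unchanged, and if u = 0 v[1..k-1] k v[k+1..] the
   only entry pointing back to x is the k that rslink wrote over v[k] = 0. *)
From Pilot Require Import Defs.
From mathcomp Require Import all_boot.
Set Implicit Arguments. Unset Strict Implicit. Unset Printing Implicit Defensive.

Section PrevEncoding.
Variables (Sigma Pi : eqType).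
Implicit Types (s : pstring Sigma Pi) (w : pcode Sigma).

Definition is_param (y : Sigma + Pi) : bool := if y is inr _ then true else false.

Definition backref_bounded w := forall j m, nth (inr 0) w j = inr m -> m <= j.

Definition forget_head w : pcode Sigma :=
  mkseq (fun j => let y := nth (inr 0) w j in if y == inr j.+1 then inr 0 else y)
        (size w).

Lemma prev_at_bounded s j y m : Defs.prev_at s j y = inr m -> m <= j.
Proof.
case: y => [c|p] //=; case: ifP => [lt_m [<-]|_ [<-]] //.
by apply: leq_trans lt_m _; rewrite size_take_min geq_minl.
Qed.

Lemma prev_at_new s j p : inr p \notin take j s -> Defs.prev_at s j (inr p) = inr 0.
Proof. by move=> p_new /=; rewrite memNindex ?mem_rev // size_rev ltnn. Qed.

Lemma prev_at_cons x s j y : j < size s ->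
  Defs.prev_at (x :: s) j.+1 y =
  if [&& y == x, is_param y & y \notin take j s] then inr j.+1 else Defs.prev_at s j y.
Proof.
move=> lt_j; case: y => [c|p] /=; first by rewrite andbF.
have size_pre : size (take j s) = j by rewrite size_take lt_j.
rewrite rev_cons -cats1 index_cat mem_rev /= size_rev.
have [p_old|p_new] /= := boolP (inr p \in take j s).
  rewrite andbF; have lt_idx : index (inr p) (rev (take j s)) < size (take j s).
    by rewrite -size_rev index_mem mem_rev.
  by rewrite lt_idx (ltn_trans lt_idx).
rewrite andbT memNindex ?mem_rev // size_rev ltnn size_pre.
by rewrite [inr p == x]eq_sym; case: eqP; rewrite ?addn0 ?addn1 ?ltnSn ?ltnn.
Qed.

Lemma size_prev_encoding s : size (prev_encoding s) = size s.
Proof. by rewrite size_map size_zip size_iota minnn. Qed.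

Lemma nth_prev_encoding s d d' j :
  j < size s -> nth d (prev_encoding s) j = Defs.prev_at s j (nth d' s j).
Proof.
move=> lt_j; rewrite (nth_map (0, d')) ?size_zip ?size_iota ?minnn //.
by rewrite nth_zip ?size_iota // nth_iota.
Qed.

Lemma prev_encoding_bounded s : backref_bounded (prev_encoding s).
Proof.
move=> j m; have [lt_j|le_j] := ltnP j (size s); last first.
  by rewrite nth_default ?size_prev_encoding // => -[<-].
by case: s lt_j => // x s' lt_j; rewrite (nth_prev_encoding _ x) //; apply: prev_at_bounded.
Qed.

Lemma prev_encoding_behead s :
  prev_encoding (behead s) = forget_head (behead (prev_encoding s)).
Proof.
case: s => [|x s] //; rewrite [behead (x :: s)]/=; apply: (@eq_from_nth _ (inr 0)).
  by rewrite size_mkseq size_behead !size_prev_encoding.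
move=> j; rewrite size_prev_encoding => lt_j.
rewrite nth_mkseq ?size_behead ?size_prev_encoding // nth_behead.
rewrite !(nth_prev_encoding _ x) //= prev_at_cons //.
set y := nth x s j.
have [/and3P [_ param_y new_y]|_] := boolP [&& y == x, is_param y & y \notin take j s].
  by rewrite eqxx; case: y param_y new_y => // p _; apply: prev_at_new.
by case: ifP => // /eqP /prev_at_bounded; rewrite ltnn.
Qed.

Lemma forget_head_id w : backref_bounded w -> forget_head w = w.
Proof.
move=> bw; apply: (@eq_from_nth _ (inr 0)); rewrite size_mkseq // => j lt_j.
by rewrite /forget_head nth_mkseq //=; case: ifP => // /eqP /bw; rewrite ltnn.
Qed.

Lemma forget_head_set_nth w j : backref_bounded w -> j < size w ->
  nth (inr 0) w j = inr 0 -> forget_head (set_nth (inr 0) w j (inr j.+1)) = w.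
Proof.
move=> bw lt_j w_j0; apply: (@eq_from_nth _ (inr 0)).
  by rewrite size_mkseq size_set_nth (maxn_idPr lt_j).
rewrite size_mkseq size_set_nth (maxn_idPr lt_j) => i lt_i.
rewrite /forget_head nth_mkseq ?size_set_nth ?(maxn_idPr lt_j) // nth_set_nth /=.
have [->|_] := eqVneq i j; first by rewrite eqxx.
by case: ifP => // /eqP /bw; rewrite ltnn.
Qed.

Lemma backref_bounded_prefix w w' :
  prefix w w' -> backref_bounded w' -> backref_bounded w.
Proof.
rewrite prefixE => /eqP <- bw' j m; have [lt_j|le_j] := ltnP j (size w).
  by rewrite nth_take //; apply: bw'.
by rewrite nth_default ?size_take_min ?(leq_trans (geq_minl _ _)) // => -[<-].
Qed.

End PrevEncoding.

Section SequenceHashTree.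
Variable (Sigma : eqType).
Implicit Types (nodes ss : seq (pcode Sigma)) (w : pcode Sigma).

Lemma mem_foldl_sht_insert nodes ss w :
  w \in foldl (@sht_insert Sigma) nodes ss -> (w \in nodes) || has (prefix w) ss.
Proof.
elim: ss nodes => [|s ss IHss] nodes /=; first by rewrite orbF.
move=> /IHss /orP [|->]; last by rewrite !orbT.
rewrite /sht_insert; case: ifP => _ /=; last by move->.
by rewrite mem_rcons in_cons => /orP [/eqP ->|->]; rewrite ?prefix_take ?orbT.
Qed.

Lemma mem_sht ss w : w \in sht ss -> has (prefix w) ([::] :: ss).
Proof.
by move/mem_foldl_sht_insert; rewrite inE /= => /orP [/eqP ->|->]; rewrite ?orbT.
Qed.

End SequenceHashTree.

Lemma PPH_backref_bounded (Sigma Pi : eqType) (T : pstring Sigma Pi) w :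
  w \in PPH T -> backref_bounded w.
Proof.
move/mem_sht/hasP => [s s_in /backref_bounded_prefix]; apply.
move: s_in; rewrite inE => /predU1P [-> j m|/mapP [k _ ->]].
  by rewrite nth_nil => -[<-].
exact: prev_encoding_bounded.
Qed.

Theorem lemma3 (Sigma Pi : eqType) (T : pstring Sigma Pi)
  (v : pcode Sigma) (a : (Sigma + nat)%type) (u : pcode Sigma) :
  v \in PPH T ->
  match a with inl _ => True | inr k => k < size T end ->
  rslink T a v = Some u ->
  u \in PPH T ->
  forall X : pstring Sigma Pi, prev_encoding X = u -> prev_encoding (behead X) = v.
Proof.
move=> /PPH_backref_bounded bv _ link_u _ X prev_X.
rewrite prev_encoding_behead prev_X.
case: a link_u => [c|[|k]] /=; case: ifP => // link_cond [<-].
- exact: forget_head_id.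
- exact: forget_head_id.
- case/and4P: link_cond => _ lt_kv v_k0 _.
  by apply: forget_head_set_nth; rewrite // (set_nth_default (inr 1)) ?(eqP v_k0).
Qed.
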